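(* Let $\lambda>0$ and $\mu>0$, and let $i(\cdot)$ and $d(\cdot)$ be probability distributions on $\{1,2,\dots\}$ with $d(1)>0$. Consider the continuous-time Markov chain on sequence lengths $n\in\{0,1,2,\dots\}$ induced by the indel process described in the context: from length $n$ the chain jumps to $n+k$ ($k\ge1$) at rate $(n+1)\lambda i(k)$, and to $n-k$ ($1\le k\le n$) at rate $(n-k+1)\mu d(k)$. Suppose this length process is time reversible with respect to an equilibrium distribution $q$ on $\{0,1,2,\dots\}$, i.e. $q$ is a probability distribution satisfying detailed balance for all these transitions, and $q(n)>0$ for all $n$. Then: (i) $q(x)=r(1-r)^x$ for all $x\in\{0,1,2,\dots\}$, where $1-r=\dfrac{\lambda i(1)}{\mu d(1)}$ and $0<r<1$; (ii) $\dfrac{\lambda}{\mu}=\sum_{k=1}^\infty (1-r)^k d(k)<1$; (iii) $i(k)=\dfrac{\mu}{\lambda}(1-r)^k d(k)$ for all $k\in\{1,2,\dots\}$. Conversely, for any $r\in(0,1)$, any probability distribution $d$ on $\{1,2,\dots\}$ with $d(1)>0$, and any $\mu>0$, defining $\lambda$ by (ii) and $i$ by (iii) yields a probability distribution $i$ on $\{1,2,\dots\}$ and rates for which the length process is reversible with equilibrium distribution $q$ given by (i).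
   Context: Indel model. A sequence of length $n$ has bases numbered $1,\dots,n$ and positions numbered $0,\dots,n$ (base $j$ lies between positions $j-1$ and $j$). An insertion of size $k\ge1$ at position $p\in\{0,\dots,n\}$ adds $k$ bases at that position and occurs at rate $\lambda i(k)$ for each such position. A deletion of size $k$ at position $p\in\{0,\dots,n-1\}$ removes the bases between positions $p$ and $p+k$, is allowed only when $1\le k\le n-p$, and occurs at rate $\mu d(k)$ for each such allowed pair $(p,k)$. Here $i(\cdot)$ and $d(\cdot)$ (the base insertion and deletion fragment size distributions) are probability distributions on the positive integers, and $\lambda,\mu$ are the total insertion and deletion rates per site on an infinitely long sequence. Consequently, a sequence of length $n$ has $n+1$ insertion positions and exactly $n-k+1$ allowed deletion positions for fragments of size $k\le n$. *)

From Stdlib Require Import Reals.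
Open Scope R_scope.

(* A probability distribution on the positive integers {1,2,...}:
   only the values at k >= 1 matter (value at 0 is ignored). *)
Definition pdist_pos (p : nat -> R) : Prop :=
  (forall k : nat, (1 <= k)%nat -> 0 <= p k) /\
  infinite_sum (fun k => p (S k)) 1.

Definition pdist_nat (q : nat -> R) : Prop :=
  (forall n : nat, 0 <= q n) /\ infinite_sum q 1.

(* Transition rate of the length process from length n to length m:
   n -> n+k (k>=1) at rate (n+1) lam i(k);
   n -> n-k (1<=k<=n) at rate (n-k+1) mu d(k)   (here n-k = m). *)
Definition len_rate (lam mu : R) (i d : nat -> R) (n m : nat) : R :=
  if Nat.ltb n m then INR (n + 1) * lam * i (m - n)%nat
  else if Nat.ltb m n then INR (m + 1) * mu * d (n - m)%nat
  else 0.

Definition detailed_balance (lam mu : R) (i d q : nat -> R) : Prop :=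
  forall n m : nat, q n * len_rate lam mu i d n m = q m * len_rate lam mu i d m n.

From Stdlib Require Import Reals Lra Lia.
Open Scope R_scope.

(* Detailed balance between n and n + k cancels the common factor n + 1 of the
   two rates, leaving q(n) lam i(k) = q(n+k) mu d(k).  With k = 1 this makes q
   geometric with ratio s = lam i(1) / (mu d(1)); positivity and summability of
   q force 0 < s < 1 and q(0) = 1 - s.  With n = 0 it expresses i(k) through
   d(k), and the total mass 1 of i turns into lam / mu = sum_k s^k d(k), which
   is < 1 because d(1) > 0.  Conversely these formulas satisfy the jump identity
   for every n and k, hence detailed balance. *)

Lemma infinite_sum_ext (a b : nat -> R) (l : R) :
  (forall k, a k = b k) -> infinite_sum a l -> infinite_sum b l.
Proof.
  intros Hab. apply Un_cv_ext. intros n. apply sum_eq. auto.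
Qed.

Lemma infinite_sum_scal (a : nat -> R) (l c : R) :
  infinite_sum a l -> infinite_sum (fun k => c * a k) (c * l).
Proof.
  intros H.
  assert (Hc : Un_cv (fun _ => c) c).
  { intros eps Heps. exists 0%nat. intros n _. unfold R_dist.
    rewrite Rminus_diag, Rabs_R0. lra. }
  apply (Un_cv_ext (fun n => c * sum_f_R0 a n)); [|exact (CV_mult _ _ _ _ Hc H)].
  intros n. rewrite scal_sum. apply sum_eq. intros; ring.
Qed.

Lemma infinite_sum_minus (a b : nat -> R) (la lb : R) :
  infinite_sum a la -> infinite_sum b lb ->
  infinite_sum (fun k => a k - b k) (la - lb).
Proof.
  intros Ha Hb.
  apply (Un_cv_ext (fun n => sum_f_R0 a n - sum_f_R0 b n));
    [|exact (CV_minus _ _ _ _ Ha Hb)].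
  intros n. symmetry. apply minus_sum.
Qed.

Lemma infinite_sum_geometric (c s : R) : 0 <= s < 1 ->
  infinite_sum (fun n => c * s ^ n) (c / (1 - s)).
Proof.
  intros Hs.
  assert (Habs : Rabs s < 1) by (rewrite Rabs_right; lra).
  apply (infinite_sum_ext (fun k => c * (1 * s ^ k))); [intros k; ring|].
  exact (infinite_sum_scal _ _ c (GP_infinite s Habs)).
Qed.

(* A positive constant sequence is not summable, so neither is c s^n with s >= 1. *)
Lemma summable_geometric_ratio_lt_1 (c s l : R) :
  0 < c -> infinite_sum (fun n => c * s ^ n) l -> s < 1.
Proof.
  intros Hc Hsum. destruct (Rlt_le_dec s 1) as [Hs | Hs]; [exact Hs | exfalso].
  assert (Hterm : forall n, c <= c * s ^ n).
  { intros n. pose proof (pow_R1_Rle s n Hs). nra. }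
  assert (Hpartial : forall N, INR (S N) * c <= sum_f_R0 (fun n => c * s ^ n) N).
  { induction N as [|N IH]; [simpl; lra|].
    rewrite tech5, S_INR. pose proof (Hterm (S N)). lra. }
  assert (Hbound : forall N, sum_f_R0 (fun n => c * s ^ n) N <= l).
  { intros N. apply sum_incr; [exact Hsum|]. intros n.
    pose proof (Hterm n). lra. }
  destruct (INR_unbounded (l / c)) as [N HN].
  pose proof (Hpartial N) as HN'. pose proof (Hbound N) as HNl.
  rewrite S_INR in HN'.
  assert (Hscaled : INR N * c > l / c * c) by (apply Rmult_gt_compat_r; lra).
  replace (l / c * c) with l in Hscaled by (field; lra). lra.
Qed.

Lemma len_rate_up (lam mu : R) (i d : nat -> R) (n k : nat) : (1 <= k)%nat ->
  len_rate lam mu i d n (n + k) = INR (n + 1) * lam * i k.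
Proof.
  intros Hk. unfold len_rate.
  rewrite (proj2 (Nat.ltb_lt n (n + k))) by lia.
  replace (n + k - n)%nat with k by lia. reflexivity.
Qed.

Lemma len_rate_down (lam mu : R) (i d : nat -> R) (n k : nat) : (1 <= k)%nat ->
  len_rate lam mu i d (n + k) n = INR (n + 1) * mu * d k.
Proof.
  intros Hk. unfold len_rate.
  rewrite (proj2 (Nat.ltb_ge (n + k) n)) by lia.
  rewrite (proj2 (Nat.ltb_lt n (n + k))) by lia.
  replace (n + k - n)%nat with k by lia. reflexivity.
Qed.

Lemma detailed_balance_jump (lam mu : R) (i d q : nat -> R) (n k : nat) :
  detailed_balance lam mu i d q -> (1 <= k)%nat ->
  q n * lam * i k = q (n + k)%nat * mu * d k.
Proof.
  intros Hdb Hk. pose proof (Hdb n (n + k)%nat) as E.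
  rewrite len_rate_up, len_rate_down in E by exact Hk.
  assert (Hn : 0 < INR (n + 1)) by (apply lt_0_INR; lia).
  apply (Rmult_eq_reg_l (INR (n + 1))); [|lra].
  transitivity (q n * (INR (n + 1) * lam * i k)); [ring|].
  rewrite E. ring.
Qed.

Lemma detailed_balance_from_jumps (lam mu : R) (i d q : nat -> R) :
  (forall n k, (1 <= k)%nat -> q n * lam * i k = q (n + k)%nat * mu * d k) ->
  detailed_balance lam mu i d q.
Proof.
  intros Hjump n m.
  destruct (Nat.lt_total n m) as [Hnm | [-> | Hmn]]; [| reflexivity |].
  - replace m with (n + (m - n))%nat by lia.
    rewrite len_rate_up, len_rate_down by lia.
    transitivity (INR (n + 1) * (q n * lam * i (m - n)%nat)); [ring|].
    rewrite Hjump by lia. ring.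
  - replace n with (m + (n - m))%nat by lia.
    rewrite len_rate_up, len_rate_down by lia.
    transitivity (INR (m + 1) * (q m * lam * i (n - m)%nat)); [|ring].
    rewrite Hjump by lia. ring.
Qed.

Section DiscountedDeletionSeries.

Variables (d : nat -> R) (s : R).
Hypotheses (Hd : pdist_pos d) (Hd1 : 0 < d 1%nat) (Hs : 0 < s < 1).

Lemma discounted_term_bounds (k : nat) : 0 <= s ^ S k * d (S k) <= d (S k).
Proof.
  assert (Hdk : 0 <= d (S k)) by (apply (proj1 Hd); lia).
  assert (Hpow : 0 <= s ^ S k <= 1).
  { split; [apply pow_le; lra|]. rewrite <- (pow1 (S k)). apply pow_incr. lra. }
  split; nra.
Qed.

Lemma discounted_series_summable :
  exists l, infinite_sum (fun k => s ^ S k * d (S k)) l.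
Proof.
  destruct (Rseries_CV_comp (fun k => s ^ S k * d (S k)) (fun k => d (S k))
              discounted_term_bounds (exist _ 1 (proj2 Hd))) as [l Hl].
  now exists l.
Qed.

(* Compare with the total mass 1 of d using only the first term, which is
   where d 1 > 0 enters. *)
Lemma discounted_series_bounds (l : R) :
  infinite_sum (fun k => s ^ S k * d (S k)) l -> 0 < l < 1.
Proof.
  intros Hl. split.
  - enough (0 < sum_f_R0 (fun k => s ^ S k * d (S k)) 0) by
      (pose proof (sum_incr _ 0 l Hl (fun k => proj1 (discounted_term_bounds k))); lra).
    simpl. nra.
  - pose proof (infinite_sum_minus _ _ _ _ (proj2 Hd) Hl) as Hgap.
    assert (Hgap_nonneg : forall k, 0 <= d (S k) - s ^ S k * d (S k)).
    { intros k. pose proof (discounted_term_bounds k). lra. }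
    pose proof (sum_incr _ 0 _ Hgap Hgap_nonneg) as Hfirst. simpl in Hfirst. nra.
Qed.

End DiscountedDeletionSeries.

Section ReversibleLengthProcess.

Variables (lam mu : R) (i d q : nat -> R).
Hypotheses (Hlam : 0 < lam) (Hmu : 0 < mu) (Hi : pdist_pos i)
  (Hd1 : 0 < d 1%nat) (Hq : pdist_nat q) (Hq_pos : forall n, 0 < q n)
  (Hdb : detailed_balance lam mu i d q).

Let s := lam * i 1%nat / (mu * d 1%nat).

Lemma reversible_equilibrium_geometric (n : nat) : q n = q 0%nat * s ^ n.
Proof.
  induction n as [|n IH]; [simpl; ring|].
  pose proof (detailed_balance_jump _ _ _ _ _ n 1 Hdb (le_n 1)) as Hstep.
  rewrite Nat.add_1_r in Hstep.
  assert (Hmd : 0 < mu * d 1%nat) by (apply Rmult_lt_0_compat; lra).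
  assert (q (S n) = q n * s) as ->.
  { unfold s. apply (Rmult_eq_reg_r (mu * d 1%nat)); [|lra].
    transitivity (q n * lam * i 1%nat); [rewrite Hstep; ring | field; lra]. }
  rewrite IH. simpl. ring.
Qed.

Lemma reversible_ratio_bounds : 0 < s < 1.
Proof.
  assert (Hq0 := Hq_pos 0).
  split.
  - pose proof (Hq_pos 1) as Hq1. rewrite reversible_equilibrium_geometric in Hq1.
    simpl in Hq1. nra.
  - apply (summable_geometric_ratio_lt_1 (q 0%nat) s 1 Hq0).
    apply (infinite_sum_ext q); [exact reversible_equilibrium_geometric | exact (proj2 Hq)].
Qed.

Lemma reversible_equilibrium_mass_0 : q 0%nat = 1 - s.
Proof.
  pose proof reversible_ratio_bounds as Hs.
  assert (Hsum : infinite_sum q (q 0%nat / (1 - s))).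
  { apply (infinite_sum_ext (fun n => q 0%nat * s ^ n)).
    - intros n. symmetry. apply reversible_equilibrium_geometric.
    - apply infinite_sum_geometric. lra. }
  pose proof (uniqueness_sum _ _ _ Hsum (proj2 Hq)) as Hone.
  apply (Rmult_eq_reg_r (/ (1 - s))).
  - rewrite Rinv_r by lra. exact Hone.
  - apply Rinv_neq_0_compat. lra.
Qed.

Lemma reversible_insertion_law (k : nat) : (1 <= k)%nat ->
  i k = mu / lam * s ^ k * d k.
Proof.
  intros Hk. pose proof (detailed_balance_jump _ _ _ _ _ 0 k Hdb Hk) as Hjump.
  simpl in Hjump. rewrite (reversible_equilibrium_geometric k) in Hjump.
  assert (Hq0 := Hq_pos 0).
  apply (Rmult_eq_reg_l (q 0%nat * lam)); [|nra].
  transitivity (q 0%nat * s ^ k * mu * d k); [rewrite <- Hjump; ring | field; lra].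
Qed.

(* The insertion law says lam i(k) = mu s^k d(k); summing over k uses that i has mass 1. *)
Lemma reversible_rate_ratio_series :
  infinite_sum (fun k => s ^ S k * d (S k)) (lam / mu).
Proof.
  pose proof (infinite_sum_scal _ _ (lam / mu) (proj2 Hi)) as Hsum.
  rewrite Rmult_1_r in Hsum.
  apply (infinite_sum_ext (fun k => lam / mu * i (S k))); [|exact Hsum].
  intros k. rewrite reversible_insertion_law by lia. field. lra.
Qed.

End ReversibleLengthProcess.

Lemma pdist_nat_geometric (r : R) : 0 < r < 1 -> pdist_nat (fun x => r * (1 - r) ^ x).
Proof.
  intros Hr. split.
  - intros n. apply Rmult_le_pos; [lra | apply pow_le; lra].
  - pose proof (infinite_sum_geometric r (1 - r) ltac:(lra)) as Hsum.
    replace (r / (1 - (1 - r))) with 1 in Hsum by (field; lra). exact Hsum.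
Qed.

Section ReversibleConstruction.

Variables (r mu lam : R) (d : nat -> R).
Hypotheses (Hr : 0 < r < 1) (Hd : pdist_pos d) (Hd1 : 0 < d 1%nat) (Hmu : 0 < mu)
  (Hlam : infinite_sum (fun k => (1 - r) ^ S k * d (S k)) (lam / mu)).

Lemma construction_rate_pos : 0 < lam.
Proof.
  assert (Hratio : 0 < lam / mu) by
    (apply (discounted_series_bounds d (1 - r)); auto; lra).
  replace lam with (lam / mu * mu) by (field; lra). nra.
Qed.

Lemma construction_insertion_pdist : pdist_pos (fun k => mu / lam * (1 - r) ^ k * d k).
Proof.
  pose proof construction_rate_pos as Hlam_pos. split.
  - intros k Hk. assert (0 <= d k) by (apply (proj1 Hd); lia).
    assert (0 <= (1 - r) ^ k) by (apply pow_le; lra).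
    assert (0 < mu / lam) by (apply Rdiv_lt_0_compat; lra).
    apply Rmult_le_pos; [apply Rmult_le_pos|]; lra.
  - pose proof (infinite_sum_scal _ _ (mu / lam) Hlam) as Hsum.
    replace (mu / lam * (lam / mu)) with 1 in Hsum by (field; lra).
    apply (infinite_sum_ext _ _ _ (fun k => eq_sym (Rmult_assoc _ _ _)) Hsum).
Qed.

Lemma construction_detailed_balance :
  detailed_balance lam mu (fun k => mu / lam * (1 - r) ^ k * d k) d
    (fun x => r * (1 - r) ^ x).
Proof.
  pose proof construction_rate_pos as Hlam_pos.
  apply detailed_balance_from_jumps. intros n k _.
  rewrite pow_add. field. lra.
Qed.

End ReversibleConstruction.

Theorem proposition1 :
  (* forward direction *)
  (forall (lam mu : R) (i d q : nat -> R),
    0 < lam -> 0 < mu ->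
    pdist_pos i -> pdist_pos d -> 0 < d 1%nat ->
    pdist_nat q -> (forall n : nat, 0 < q n) ->
    detailed_balance lam mu i d q ->
    let r := 1 - lam * i 1%nat / (mu * d 1%nat) in
    (0 < r < 1 /\ (forall x : nat, q x = r * (1 - r) ^ x)) /\
    (infinite_sum (fun k => (1 - r) ^ (S k) * d (S k)) (lam / mu) /\ lam / mu < 1) /\
    (forall k : nat, (1 <= k)%nat -> i k = mu / lam * (1 - r) ^ k * d k))
  /\
  (* converse *)
  (forall (r mu : R) (d : nat -> R),
    0 < r < 1 -> pdist_pos d -> 0 < d 1%nat -> 0 < mu ->
    (exists lam : R, infinite_sum (fun k => (1 - r) ^ (S k) * d (S k)) (lam / mu)) /\
    (forall lam : R,
      infinite_sum (fun k => (1 - r) ^ (S k) * d (S k)) (lam / mu) ->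
      let i := fun k : nat => mu / lam * (1 - r) ^ k * d k in
      let q := fun x : nat => r * (1 - r) ^ x in
      0 < lam /\ pdist_pos i /\ pdist_nat q /\ detailed_balance lam mu i d q)).
Proof.
  split.
  - intros lam mu i d q Hlam Hmu Hi Hd Hd1 Hq Hq_pos Hdb r.
    replace (1 - r) with (lam * i 1%nat / (mu * d 1%nat)) by (unfold r; ring).
    pose proof (reversible_ratio_bounds _ _ _ _ _ Hmu Hd1 Hq Hq_pos Hdb) as Hs.
    pose proof (reversible_rate_ratio_series _ _ _ _ _ Hlam Hmu Hi Hd1 Hq_pos Hdb)
      as Hseries.
    split; [split|split; [split|]].
    + unfold r. lra.
    + intros x. rewrite (reversible_equilibrium_geometric _ _ _ _ _ Hmu Hd1 Hdb x).
      rewrite (reversible_equilibrium_mass_0 _ _ _ _ _ Hmu Hd1 Hq Hq_pos Hdb).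
      unfold r. reflexivity.
    + exact Hseries.
    + exact (proj2 (discounted_series_bounds _ _ Hd Hd1 Hs _ Hseries)).
    + exact (reversible_insertion_law _ _ _ _ _ Hlam Hmu Hd1 Hq_pos Hdb).
  - intros r mu d Hr Hd Hd1 Hmu. split.
    + destruct (discounted_series_summable d (1 - r) Hd ltac:(lra)) as [l Hl].
      exists (mu * l). replace (mu * l / mu) with l by (field; lra). exact Hl.
    + intros lam Hlam i q. repeat split.
      * exact (construction_rate_pos r mu lam d Hr Hd Hd1 Hmu Hlam).
      * exact (proj1 (construction_insertion_pdist r mu lam d Hr Hd Hd1 Hmu Hlam)).
      * exact (proj2 (construction_insertion_pdist r mu lam d Hr Hd Hd1 Hmu Hlam)).
      * exact (proj1 (pdist_nat_geometric r Hr)).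
      * exact (proj2 (pdist_nat_geometric r Hr)).
      * exact (construction_detailed_balance r mu lam d Hr Hd Hd1 Hmu Hlam).
Qed.
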